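(* Consider an $(n+2)$-dimensional ($n\ge1$) static spherically symmetric spacetime with line element $ds^2=-F(r)dt^2+G(r)dr^2+r^2d\ell^2_{S^n}$, solving Einstein's equations $G_{ab}+\Lambda g_{ab}=8\pi T_{ab}$ with energy-momentum tensor $T^b_a=\mathrm{diag}\{-\rho(r),p_r(r),p_\theta(r),\dots,p_\theta(r)\}$ satisfying the dominant energy condition $|p_r(r)|,|p_\theta(r)|\le\rho(r)<+\infty$. Suppose $0<F(r),G(r)<+\infty$ on an interval $(r_i^-,r_i^+)\subset(0,+\infty)$ with $F,F',G\in C^1((r_i^-,r_i^+))$. Then: (i) $F(r)G(r)$ is a nondecreasing function of $r$ on $(r_i^-,r_i^+)$, and hence bounded in a neighbourhood of $r_i^-$; (ii) in the outer region $(r_m^-,+\infty)$ of an asymptotically flat spacetime (i.e. $0<F,G<\infty$ on $(r_m^-,+\infty)$ and $\lim_{r\to+\infty}F(r)=\lim_{r\to+\infty}G(r)=1$), $F(r)G(r)$ is bounded.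
   Context: $d\ell^2_{S^n}$ is the round metric on the unit sphere $S^n$, $G_{ab}$ the Einstein tensor of the metric, $\Lambda$ the cosmological constant. *)

From Stdlib Require Import Reals Lra.
From Coquelicot Require Import Coquelicot.
Open Scope R_scope.

(* Metric  ds^2 = -F(r) dt^2 + G(r) dr^2 + r^2 dl^2_{S^n}  in dimension n+2.
   Mixed components G^a_b of its Einstein tensor (t-t, r-r, and any angular
   diagonal component; all off-diagonal components vanish), written out in
   terms of F, G and their r-derivatives. *)

Definition Einstein_tt (n : nat) (F G : R -> R) (r : R) : R :=
  - (INR n * (INR n - 1)) / (2 * r ^ 2) * (1 - / G r)
  - INR n * Derive G r / (2 * r * (G r) ^ 2).

Definition Einstein_rr (n : nat) (F G : R -> R) (r : R) : R :=
  INR n / (2 * r ^ 2) *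
    (r * Derive F r / (F r * G r) - (INR n - 1) * (1 - / G r)).

Definition Einstein_thth (n : nat) (F G : R -> R) (r : R) : R :=
  / G r *
    ( Derive (Derive F) r / (2 * F r)
      - (Derive F r) ^ 2 / (4 * (F r) ^ 2)
      - Derive F r * Derive G r / (4 * F r * G r)
      + (INR n - 1) / r * (Derive F r / (2 * F r) - Derive G r / (2 * G r)) )
  - (INR n - 1) * (INR n - 2) / (2 * r ^ 2) * (1 - / G r).

(* On the (open) set I of radii:  0 < F, G < +oo,  F, F', G are C^1,
   Einstein's equations  G^a_b + Lambda delta^a_b = 8 pi T^a_b  with
   T^a_b = diag(-rho, p_r, p_th, ..., p_th), and the dominant energy
   condition |p_r|, |p_th| <= rho (rho real-valued, hence < +oo). *)
Definition static_solution (n : nat) (Lambda : R) (F G rho pr pth : R -> R)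
  (I : R -> Prop) : Prop :=
  forall r, I r ->
    0 < F r /\ 0 < G r /\
    ex_derive F r /\ ex_derive (Derive F) r /\ continuous (Derive (Derive F)) r /\
    ex_derive G r /\ continuous (Derive G) r /\
    Einstein_tt n F G r + Lambda = 8 * PI * (- rho r) /\
    Einstein_rr n F G r + Lambda = 8 * PI * pr r /\
    Einstein_thth n F G r + Lambda = 8 * PI * pth r /\
    Rabs (pr r) <= rho r /\ Rabs (pth r) <= rho r.

(* Along a static solution, the combination G^r_r - G^t_t of the Einstein
   tensor equals n (F G)' / (2 r F G^2), while Einstein's equations turn it
   into 8 pi (p_r + rho), which is nonnegative under the dominant energy
   condition.  Hence F G is nondecreasing, so it is bounded near the inner
   end of any regular interval by its value at an interior point, and on an
   asymptotically flat outer region by its limit 1 at infinity. *)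

From Stdlib Require Import Reals Lra.
From Coquelicot Require Import Coquelicot.
Open Scope R_scope.

Lemma Derive_mult_Einstein n F G r :
  INR n <> 0 -> r <> 0 -> F r <> 0 -> G r <> 0 ->
  Derive F r * G r + F r * Derive G r =
  2 * r * F r * G r ^ 2 / INR n * (Einstein_rr n F G r - Einstein_tt n F G r).
Proof.
  intros n0 r0 F0 G0.
  unfold Einstein_rr, Einstein_tt; field; auto.
Qed.

Lemma static_solution_Derive_mult_ge0 n Lambda F G rho pr pth (I : R -> Prop) r :
  (1 <= n)%nat -> static_solution n Lambda F G rho pr pth I -> I r -> 0 < r ->
  0 <= Derive F r * G r + F r * Derive G r.
Proof.
  intros Hn Hsol Ir r_pos.
  destruct (Hsol r Ir) as (F_pos & G_pos & _ & _ & _ & _ & _ & Ett & Err & _ & Hpr & _).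
  assert (n_ge1 : 1 <= INR n) by (apply (le_INR 1); auto).
  assert (null_energy : 0 <= 8 * PI * (pr r + rho r)).
  { apply Rabs_le_between in Hpr; pose proof PI_RGT_0; nra. }
  rewrite (Derive_mult_Einstein n) by lra.
  replace (Einstein_rr n F G r - Einstein_tt n F G r) with (8 * PI * (pr r + rho r))
    by lra.
  apply Rmult_le_pos; auto.
  assert (0 < 2 * r * F r * G r ^ 2) by (apply Rmult_lt_0_compat; [nra | apply pow_lt; lra]).
  apply Rmult_le_pos; [lra | apply Rlt_le, Rinv_0_lt_compat; lra].
Qed.

Lemma le_of_is_derive_ge0 (f df : R -> R) a b :
  a <= b -> (forall x, a <= x <= b -> is_derive f x (df x) /\ 0 <= df x) ->
  f a <= f b.
Proof.
  intros ab Hdf.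
  pose proof (MVT_gen f a b df) as mvt; cbv zeta in mvt.
  rewrite Rmin_left, Rmax_right in mvt by lra.
  destruct mvt as (c & Hc & mvt).
  - intros x Hx; apply Hdf; lra.
  - intros x Hx; apply continuity_pt_filterlim, (ex_derive_continuous f).
    exists (df x); apply Hdf; lra.
  - pose proof (proj2 (Hdf c Hc)); nra.
Qed.

Lemma static_solution_mult_nondecreasing n Lambda F G rho pr pth (I : R -> Prop) r1 r2 :
  (1 <= n)%nat -> static_solution n Lambda F G rho pr pth I ->
  0 < r1 -> r1 <= r2 -> (forall x, r1 <= x <= r2 -> I x) ->
  F r1 * G r1 <= F r2 * G r2.
Proof.
  intros Hn Hsol r1_pos r12 HI.
  apply (le_of_is_derive_ge0 (fun x => F x * G x)
    (fun x => Derive F x * G x + F x * Derive G x)); auto.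
  intros x Hx; destruct (Hsol x (HI x Hx)) as (_ & _ & dF & _ & _ & dG & _).
  split.
  - apply (is_derive_mult F G); try apply Derive_correct; auto.
    intros; apply Rmult_comm.
  - apply (static_solution_Derive_mult_ge0 n Lambda F G rho pr pth I); auto; lra.
Qed.

Lemma nondecreasing_le_lim (f : R -> R) a (l : R) :
  (forall x y, a < x -> x <= y -> f x <= f y) -> is_lim f p_infty l ->
  forall x, a < x -> f x <= l.
Proof.
  intros f_mono f_lim x ax.
  apply (is_lim_le_loc (fun _ => f x) f p_infty (f x) l); auto using is_lim_const.
  exists x; intros y xy; apply f_mono; lra.
Qed.

Theorem lemma5p1 (n : nat) (Lambda : R) (F G rho pr pth : R -> R) :
  (1 <= n)%nat ->
  (* (i) on any interval (rm, rp) in (0, +oo), rp possibly +oo *)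
  (forall (rm : R) (rp : Rbar), 0 <= rm -> Rbar_lt rm rp ->
     static_solution n Lambda F G rho pr pth (fun r => rm < r /\ Rbar_lt r rp) ->
     (forall r1 r2, rm < r1 -> r1 <= r2 -> Rbar_lt r2 rp ->
        F r1 * G r1 <= F r2 * G r2) /\
     (exists delta M, 0 < delta /\
        forall r, rm < r -> r < rm + delta -> Rbar_lt r rp ->
          Rabs (F r * G r) <= M)) /\
  (* (ii) outer region of an asymptotically flat spacetime *)
  (forall rm : R, 0 <= rm ->
     static_solution n Lambda F G rho pr pth (fun r => rm < r) ->
     is_lim F p_infty 1 -> is_lim G p_infty 1 ->
     exists M, forall r, rm < r -> Rabs (F r * G r) <= M).
Proof.
  intros Hn; split.
  - intros rm rp rm_ge0 rm_rp Hsol.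
    assert (FG_mono : forall r1 r2, rm < r1 -> r1 <= r2 -> Rbar_lt r2 rp ->
        F r1 * G r1 <= F r2 * G r2).
    { intros r1 r2 rm1 r12 r2p.
      apply (static_solution_mult_nondecreasing n Lambda F G rho pr pth _ r1 r2 Hn Hsol);
        try lra.
      intros x Hx; split; [lra | apply (Rbar_le_lt_trans _ r2); simpl; auto; lra]. }
    split; auto.
    assert (interior : exists r0, rm < r0 /\ Rbar_lt r0 rp).
    { destruct rp as [p | |]; simpl in *; try contradiction.
      - exists ((rm + p) / 2); lra.
      - exists (rm + 1); split; auto; lra. }
    destruct interior as (r0 & rm_r0 & r0_rp).
    exists (r0 - rm), (F r0 * G r0); split; [lra |].
    intros r rm_r r_r0 r_rp.
    destruct (Hsol r (conj rm_r r_rp)) as (F_pos & G_pos & _).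
    rewrite Rabs_pos_eq by nra; apply FG_mono; auto; lra.
  - intros rm rm_ge0 Hsol F_lim G_lim.
    exists 1; intros r rm_r.
    destruct (Hsol r rm_r) as (F_pos & G_pos & _).
    rewrite Rabs_pos_eq by nra.
    apply (nondecreasing_le_lim (fun x => F x * G x) rm); auto.
    + intros r1 r2 rm1 r12.
      apply (static_solution_mult_nondecreasing n Lambda F G rho pr pth _ r1 r2 Hn Hsol);
        try lra.
      intros x Hx; lra.
    + replace (Finite 1) with (Rbar_mult 1 1) by (simpl; f_equal; ring).
      apply is_lim_mult; simpl; auto.
Qed.
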